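(* Let $R$ be a graded polynomial ring over $\mathbb F_2$ and let $0\to A\xrightarrow{\alpha}B\to C\to0$ be a short exact sequence of free differential graded $R$-modules such that $H_*(A)$ and $H_*(B)$ are free $R$-modules. Then the short exact sequence $$0\to\operatorname{coker}\alpha_*\to H_*(C)\to\ker\alpha_*\to0$$ derived from the long exact homology sequence (with $\alpha_*:H_*(A)\to H_*(B)$) splits as a sequence of $R$-modules. *)

From HB Require Import structures.
From mathcomp Require Import all_boot all_order all_algebra.
From mathcomp Require Import mpoly.

Set Implicit Arguments.
Unset Strict Implicit.
Unset Printing Implicit Defensive.

Import GRing.Theory.
Local Open Scope ring_scope.

(* The graded polynomial ring R = F_2[x_1,...,x_n]; the generator x_i has   *)
(* degree w i (a nonzero integer; all of the same sign, see the theorem).   *)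
Notation Rpol n := {mpoly 'F_2[n]}.

Definition wdeg (n : nat) (w : 'I_n -> int) (m : 'X_{1..n}) : int :=
  \sum_(i < n) w i * (m i)%:Z.

(* G k = the homogeneous component of degree k of V.                         *)
Definition graded_mod (n : nat) (w : 'I_n -> int) (V : lmodType (Rpol n))
    (G : int -> V -> Prop) : Prop :=
  [/\ forall k, G k 0,
      forall k u v, G k u -> G k v -> G k (u + v),
      forall k (m : 'X_{1..n}) v, G k v -> G (k + wdeg w m) ('X_[m] *: v),
      forall v, exists (s : seq int) (f : int -> V),
          (forall k, G k (f k)) /\ v = \sum_(k <- s) f k &
      forall (s : seq int) (f : int -> V), uniq s -> (forall k, G k (f k)) ->
          \sum_(k <- s) f k = 0 -> forall k, k \in s -> f k = 0].

Definition homogeneous (n : nat) (V : lmodType (Rpol n))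
    (G : int -> V -> Prop) (v : V) : Prop := exists k, G k v.

(* Differential graded R-modules (homological convention: d has degree -1;  *)
(* over F_2 the Koszul sign is irrelevant, so d is R-linear).               *)
Record dgmod (n : nat) (w : 'I_n -> int) := DGMod {
  dg_car :> lmodType (Rpol n);
  dg_gr : int -> dg_car -> Prop;
  dg_d : dg_car -> dg_car;
  dg_graded : graded_mod w dg_gr;
  dg_linear : forall (r : Rpol n) (u v : dg_car),
      dg_d (r *: u + v) = r *: dg_d u + dg_d v;
  dg_deg : forall k v, dg_gr k v -> dg_gr (k - 1) (dg_d v);
  dg_dd : forall v, dg_d (dg_d v) = 0 }.

Arguments dg_car {n w} _.
Arguments dg_gr {n w} _ _ _.
Arguments dg_d {n w} _ _.

Section DG.
Variables (n : nat) (w : 'I_n -> int).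
Implicit Types M : dgmod w.

Definition free_dgmod M : Prop :=
  exists (I : eqType) (e : I -> M),
    [/\ forall i, homogeneous (dg_gr M) (e i),
        forall v : M, exists (s : seq I) (c : I -> Rpol n),
            v = \sum_(i <- s) c i *: e i &
        forall (s : seq I) (c : I -> Rpol n), uniq s ->
            \sum_(i <- s) c i *: e i = 0 -> forall i, i \in s -> c i = 0].

Definition is_cycle M (v : M) : Prop := dg_d M v = 0.
Definition is_boundary M (v : M) : Prop := exists u : M, dg_d M u = v.

(* H_*(M) = cycles / boundaries is a free graded R-module: there are        *)
(* homogeneous cycles z_i whose homology classes form an R-basis of H_*(M). *)
Definition free_homology M : Prop :=
  exists (I : eqType) (z : I -> M),
    [/\ forall i, is_cycle (z i) /\ homogeneous (dg_gr M) (z i),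
        forall c : M, is_cycle c -> exists (s : seq I) (a : I -> Rpol n),
            is_boundary (c - \sum_(i <- s) a i *: z i) &
        forall (s : seq I) (a : I -> Rpol n), uniq s ->
            is_boundary (\sum_(i <- s) a i *: z i) ->
            forall i, i \in s -> a i = 0].

Definition dg_morph (M N : dgmod w) (f : M -> N) : Prop :=
  [/\ forall (r : Rpol n) (u v : M), f (r *: u + v) = r *: f u + f v,
      forall k v, dg_gr M k v -> dg_gr N k (f v) &
      forall v, f (dg_d M v) = dg_d N (f v)].

Definition dg_ses (A B C : dgmod w) (alpha : A -> B) (beta : B -> C) : Prop :=
  [/\ dg_morph alpha, dg_morph beta,
      injective alpha,
      (forall c : C, exists b : B, beta b = c) &
      forall b : B, beta b = 0 <-> exists a : A, alpha a = b].

Definition in_ker_alpha_star (A B : dgmod w) (alpha : A -> B) (a : A) : Prop :=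
  is_cycle a /\ is_boundary (alpha a).

(* for a cycle c of C: delta [c] = [a], delta the connecting homomorphism  *)
(* H(C) -> H(A): lift c to b in B, then d b = alpha a0 and delta [c] = [a0] *)
Definition connecting_is (A B C : dgmod w) (alpha : A -> B) (beta : B -> C)
    (c : C) (a : A) : Prop :=
  exists b : B, beta b = c /\
    exists a0 : A, alpha a0 = dg_d B b /\ is_boundary (a0 - a).

(* The short exact sequence 0 -> coker alpha_* -> H(C) -delta-> ker alpha_* *)
(* -> 0 splits (as R-modules): there is an R-linear section                 *)
(* sigma : ker alpha_* -> H(C) of delta.  sigma is given on representatives *)
(* s : A -> C (only its values on representatives of ker alpha_* matter):   *)
Definition homology_seq_splits (A B C : dgmod w) (alpha : A -> B)
    (beta : B -> C) : Prop :=
  exists s : A -> C,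
    [/\ forall a, in_ker_alpha_star alpha a -> is_cycle (s a),
        forall a a', in_ker_alpha_star alpha a -> in_ker_alpha_star alpha a' ->
           is_boundary (a - a') -> is_boundary (s a - s a'),
        forall (r : Rpol n) a a', in_ker_alpha_star alpha a ->
           in_ker_alpha_star alpha a' ->
           is_boundary (s (r *: a + a') - (r *: s a + s a')) &
        forall a, in_ker_alpha_star alpha a -> connecting_is alpha beta (s a) a].

End DG.

From HB Require Import structures.
From mathcomp Require Import all_boot all_order all_algebra.
From mathcomp Require Import mpoly.
From Stdlib Require Import ClassicalEpsilon.

Set Implicit Arguments.
Unset Strict Implicit.
Unset Printing Implicit Defensive.

Import GRing.Theory.
Local Open Scope ring_scope.

(* Fix cycles z_i whose classes form a basis of H(A) and cycles y_j whose     *)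
(* classes form a basis of H(B).  Writing alpha_*[z_i] in the y-basis gives   *)
(* chains h_i with d h_i = alpha z_i - Y_i, Y_i a y-combination.  Define the  *)
(* section on [a] = sum c_i [z_i] by beta (sum c_i h_i).  If [a] lies in      *)
(* ker alpha_*, then sum c_i [Y_i] = 0 in the free module H(B), so its        *)
(* y-coordinates vanish and sum c_i Y_i = 0 already on the chain level; hence *)
(* d (sum c_i h_i) = alpha (sum c_i z_i), so beta (sum c_i h_i) is a cycle    *)
(* whose connecting image is [a].                                             *)

(* Formal linear combinations are lists of (index, coefficient) pairs, so     *)
(* that sums and scalings of combinations are concatenations and maps.        *)
Definition comb (R : pzRingType) (I : Type) (V : lmodType R) (v : I -> V)
  (l : seq (I * R)) : V := \sum_(p <- l) p.2 *: v p.1.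

Section Combinations.
Variables (R : pzRingType) (I : Type) (V : lmodType R).
Implicit Types (v : I -> V) (l : seq (I * R)).

Lemma comb_cat v l l' : comb v (l ++ l') = comb v l + comb v l'.
Proof. by rewrite /comb big_cat. Qed.

Lemma combZ v r l : comb v [seq (p.1, r * p.2) | p <- l] = r *: comb v l.
Proof.
by rewrite /comb big_map scaler_sumr; apply: eq_bigr => p _; rewrite scalerA.
Qed.

Lemma combN v l : comb v [seq (p.1, - p.2) | p <- l] = - comb v l.
Proof.
by rewrite /comb big_map -sumrN; apply: eq_bigr => p _; rewrite scaleNr.
Qed.

Lemma eq_comb v v' l : v =1 v' -> comb v l = comb v' l.
Proof. by move=> eq_v; apply: eq_bigr => p _; rewrite eq_v. Qed.

Lemma comb_sub v v' l : comb (fun i => v i - v' i) l = comb v l - comb v' l.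
Proof. by rewrite /comb -sumrB; apply: eq_bigr => p _; rewrite scalerBr. Qed.

Lemma comb_map (s : seq I) (a : I -> R) v :
  comb v [seq (i, a i) | i <- s] = \sum_(i <- s) a i *: v i.
Proof. by rewrite /comb big_map. Qed.

End Combinations.

Lemma comb_flatten (R : pzRingType) (I J : Type) (V : lmodType R) (y : J -> V)
    (g : I -> seq (J * R)) (l : seq (I * R)) :
  comb y (flatten [seq [seq (q.1, p.2 * q.2) | q <- g p.1] | p <- l])
  = comb (fun i => comb y (g i)) l.
Proof.
elim: l => [|p l IHl]; first by rewrite /comb !big_nil.
by rewrite map_cons [flatten _]/= comb_cat IHl combZ /comb big_cons.
Qed.

Lemma comb_regroup (R : pzRingType) (I : eqType) (V : lmodType R) (v : I -> V)
    (U : seq I) (l : seq (I * R)) :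
  uniq U -> {subset map fst l <= U} ->
  comb v l = \sum_(i <- U) (\sum_(p <- l | p.1 == i) p.2) *: v i.
Proof.
move=> uniqU; elim: l => [|p l IHl] sub_lU.
  by rewrite /comb big_nil big1 // => i _; rewrite big_nil scale0r.
have pU : p.1 \in U by apply: sub_lU; rewrite inE eqxx.
rewrite /comb big_cons -/(comb v l) IHl; last first.
  by move=> x lx; apply: sub_lU; rewrite inE lx orbT.
rewrite [RHS](_ : _ = \sum_(i <- U) ((if p.1 == i then p.2 *: v i else 0)
    + (\sum_(q <- l | q.1 == i) q.2) *: v i)); last first.
  apply: eq_bigr => i _; rewrite big_cons.
  by case: eqP => _; rewrite ?scalerDl ?add0r.
rewrite big_split /=; congr (_ + _).
rewrite (bigD1_seq p.1) //= eqxx big1 ?addr0 // => i.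
by rewrite eq_sym => /negPf ->.
Qed.

Section LinearFun.
Variables (R : pzRingType) (U V : lmodType R) (f : U -> V).
Hypothesis f_lin : forall r u v, f (r *: u + v) = r *: f u + f v.

Lemma lin0 : f 0 = 0.
Proof.
have := f_lin 1 0 0; rewrite !scale1r addr0 => f0.
by apply: (@addrI _ (f 0)); rewrite addr0.
Qed.

Lemma linD u v : f (u + v) = f u + f v.
Proof. by have := f_lin 1 u v; rewrite !scale1r. Qed.

Lemma linZ r u : f (r *: u) = r *: f u.
Proof. by have := f_lin r u 0; rewrite !addr0 lin0 addr0. Qed.

Lemma linB u v : f (u - v) = f u - f v.
Proof. by rewrite linD -scaleN1r linZ scaleN1r. Qed.

Lemma lin_comb (I : Type) (z : I -> U) l : f (comb z l) = comb (f \o z) l.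
Proof.
elim: l => [|p l IHl]; first by rewrite /comb !big_nil lin0.
by rewrite /comb !big_cons linD linZ -/(comb _ _) IHl.
Qed.

End LinearFun.

Section Homologous.
Variables (n : nat) (w : 'I_n -> int) (M : dgmod w).
Implicit Types u v : M.

Definition homologous u v := is_boundary (u - v).

Lemma boundary_lin r u v :
  is_boundary u -> is_boundary v -> is_boundary (r *: u + v).
Proof. by move=> [x <-] [x' <-]; exists (r *: x + x'); rewrite dg_linear. Qed.

Lemma boundary0 : is_boundary (0 : M).
Proof. by exists 0; rewrite (lin0 (@dg_linear _ _ M)). Qed.

Lemma homologous_refl u : homologous u u.
Proof. by rewrite /homologous subrr; apply: boundary0. Qed.

Lemma homologous_sym u v : homologous u v -> homologous v u.
Proof.
move=> huv; have := boundary_lin (-1) huv boundary0.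
by rewrite addr0 scaleN1r opprB.
Qed.

Lemma homologous_trans u v u' : homologous u v -> homologous v u' -> homologous u u'.
Proof.
move=> huv hvu'; have := boundary_lin 1 huv hvu'.
by rewrite scale1r addrA subrK.
Qed.

Lemma homologous_lin r u u' v v' :
  homologous u u' -> homologous v v' -> homologous (r *: u + v) (r *: u' + v').
Proof.
move=> hu hv; have := boundary_lin r hu hv.
by rewrite /homologous opprD addrACA scalerBr.
Qed.

Definition boundary_indep (I : eqType) (z : I -> M) :=
  forall (s : seq I) (a : I -> Rpol n), uniq s ->
    is_boundary (\sum_(i <- s) a i *: z i) -> forall i, i \in s -> a i = 0.

(* After regrouping l by index, every coefficient vanishes. *)
Lemma boundary_comb_transfer (I : eqType) (z : I -> M) l :
  boundary_indep z -> is_boundary (comb z l) ->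
  forall (V : lmodType (Rpol n)) (v : I -> V), comb v l = 0.
Proof.
move=> z_indep bl V v; set U := undup (map fst l).
have uniqU : uniq U := undup_uniq _.
have sub_lU : {subset map fst l <= U} by move=> x; rewrite mem_undup.
rewrite (comb_regroup v uniqU sub_lU) big1_seq // => i /andP[_ iU].
rewrite (z_indep U (fun i => \sum_(p <- l | p.1 == i) p.2) uniqU _ i iU) ?scale0r //.
by rewrite -(comb_regroup z uniqU sub_lU).
Qed.

End Homologous.

Section Splitting.
Variables (n : nat) (w : 'I_n -> int) (A B C : dgmod w).
Variables (alpha : A -> B) (beta : B -> C).
Hypothesis alpha_lin : forall r u v, alpha (r *: u + v) = r *: alpha u + alpha v.
Hypothesis alpha_d : forall a, alpha (dg_d A a) = dg_d B (alpha a).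
Hypothesis beta_lin : forall r u v, beta (r *: u + v) = r *: beta u + beta v.
Hypothesis beta_d : forall b, beta (dg_d B b) = dg_d C (beta b).
Hypothesis beta_alpha : forall a, beta (alpha a) = 0.

Variables (I J : eqType) (z : I -> A) (y : J -> B).
Hypothesis z_indep : boundary_indep z.
Hypothesis y_indep : boundary_indep y.

(* zcoef a: coordinates of [a] in the basis ([z_i]) of H(A);                  *)
(* ay i: coordinates of alpha_*[z_i] in the basis ([y_j]) of H(B).            *)
Variables (zcoef : A -> seq (I * Rpol n)) (zprim : A -> A).
Hypothesis zcoefP :
  forall a, is_cycle a -> a - comb z (zcoef a) = dg_d A (zprim a).

Variables (h : I -> B) (ay : I -> seq (J * Rpol n)).
Hypothesis hP : forall i, dg_d B (h i) = alpha (z i) - comb y (ay i).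

Let dB := @dg_linear _ _ B.

(* The y-coordinates of alpha_* [comb z l]. *)
Definition alpha_coef (l : seq (I * Rpol n)) :=
  flatten [seq [seq (q.1, p.2 * q.2) | q <- ay p.1] | p <- l].

Lemma d_lift a : is_cycle a ->
  dg_d B (comb h (zcoef a) + alpha (zprim a))
  = alpha a - comb y (alpha_coef (zcoef a)).
Proof.
move=> ca; rewrite (linD dB) (lin_comb dB) -alpha_d -(zcoefP ca).
rewrite (eq_comb _ hP) comb_sub -(lin_comb alpha_lin) comb_flatten.
by rewrite (linB alpha_lin) addrC subrKA.
Qed.

Lemma alpha_coef_ker a :
  in_ker_alpha_star alpha a -> comb y (alpha_coef (zcoef a)) = 0.
Proof.
case=> ca [t dt]; apply: (boundary_comb_transfer y_indep) => //.
exists (t - (comb h (zcoef a) + alpha (zprim a))).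
by rewrite (linB dB) dt d_lift // opprB addrC subrK.
Qed.

Definition sigma a := beta (comb h (zcoef a)).

Lemma sigma_lift a : sigma a = beta (comb h (zcoef a) + alpha (zprim a)).
Proof. by rewrite (linD beta_lin) beta_alpha addr0. Qed.

Lemma beta_comb_h_eq l l' :
  homologous (comb z l) (comb z l') -> beta (comb h l) = beta (comb h l').
Proof.
move=> hll'; apply/eqP; rewrite -subr_eq0 -(linB beta_lin) -combN -comb_cat.
rewrite (lin_comb beta_lin) (boundary_comb_transfer z_indep) //.
by rewrite comb_cat combN.
Qed.

Lemma zcoef_homologous a : is_cycle a -> homologous (comb z (zcoef a)) a.
Proof. by move=> ca; apply: homologous_sym; exists (zprim a); rewrite zcoefP. Qed.

Lemma sigma_cycle a : in_ker_alpha_star alpha a -> is_cycle (sigma a).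
Proof.
move=> ka; rewrite /is_cycle sigma_lift -beta_d d_lift; last exact: ka.1.
by rewrite alpha_coef_ker // subr0 beta_alpha.
Qed.

Lemma sigma_homologous a a' : is_cycle a -> is_cycle a' ->
  homologous a a' -> sigma a = sigma a'.
Proof.
move=> ca ca' haa'; apply: beta_comb_h_eq.
apply: homologous_trans (zcoef_homologous ca) (homologous_trans haa' _).
exact/homologous_sym/zcoef_homologous.
Qed.

Lemma sigma_lin r a a' : is_cycle a -> is_cycle a' ->
  sigma (r *: a + a') = r *: sigma a + sigma a'.
Proof.
move=> ca ca'; have cra : is_cycle (r *: a + a').
  by rewrite /is_cycle dg_linear ca ca' scaler0 addr0.
rewrite /sigma -(linZ beta_lin) -(linD beta_lin) -combZ -comb_cat.
apply: beta_comb_h_eq.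
rewrite comb_cat combZ; apply: (homologous_trans (zcoef_homologous cra)).
by apply/homologous_sym/homologous_lin; apply: zcoef_homologous.
Qed.

Lemma sigma_connecting a :
  in_ker_alpha_star alpha a -> connecting_is alpha beta (sigma a) a.
Proof.
move=> ka; exists (comb h (zcoef a) + alpha (zprim a)).
split; first by rewrite sigma_lift.
exists a; split; last exact: homologous_refl.
by rewrite d_lift ?alpha_coef_ker ?subr0 //; exact: ka.1.
Qed.

Lemma sigma_splits : homology_seq_splits alpha beta.
Proof.
exists sigma; split.
- exact: sigma_cycle.
- move=> a a' ka ka' haa'; rewrite (sigma_homologous ka.1 ka'.1 haa') subrr.
  exact: boundary0.
- move=> r a a' [ca _] [ca' _]; rewrite sigma_lin // subrr; exact: boundary0.
- exact: sigma_connecting.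
Qed.

End Splitting.

Lemma homology_basis_image (n : nat) (w : 'I_n -> int) (A B : dgmod w)
    (alpha : A -> B) (I J : eqType) (z : I -> A) (y : J -> B) :
  dg_morph alpha -> (forall i, is_cycle (z i)) ->
  (forall c : B, is_cycle c -> exists (s : seq J) (a : J -> Rpol n),
     is_boundary (c - \sum_(j <- s) a j *: y j)) ->
  exists (h : I -> B) (ay : I -> seq (J * Rpol n)),
    forall i, dg_d B (h i) = alpha (z i) - comb y (ay i).
Proof.
move=> [alpha_lin _ alpha_d] z_cyc y_gen.
have [hay hayP] : exists f : I -> B * seq (J * Rpol n),
    forall i, dg_d B (f i).1 = alpha (z i) - comb y (f i).2.
  apply: (choice (fun i p => dg_d B p.1 = alpha (z i) - comb y p.2)) => i.
  have /y_gen [s [a [u du]]] : is_cycle (alpha (z i)).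
    by rewrite /is_cycle -alpha_d z_cyc (lin0 alpha_lin).
  by exists (u, [seq (j, a j) | j <- s]); rewrite comb_map.
by exists (fun i => (hay i).1), (fun i => (hay i).2).
Qed.

Lemma homology_coordinates (n : nat) (w : 'I_n -> int) (A : dgmod w)
    (I : eqType) (z : I -> A) :
  (forall c : A, is_cycle c -> exists (s : seq I) (a : I -> Rpol n),
     is_boundary (c - \sum_(i <- s) a i *: z i)) ->
  exists (zcoef : A -> seq (I * Rpol n)) (zprim : A -> A),
    forall a, is_cycle a -> a - comb z (zcoef a) = dg_d A (zprim a).
Proof.
move=> z_gen; have [dec decP] : exists f : A -> seq (I * Rpol n) * A,
    forall a, is_cycle a -> a - comb z (f a).1 = dg_d A (f a).2.
  apply: (choice (fun a p => is_cycle a -> a - comb z p.1 = dg_d A p.2)) => a.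
  have [/z_gen [s [c [u du]]]|not_ca] := excluded_middle_informative (is_cycle a).
  - by exists ([seq (i, c i) | i <- s], u) => _; rewrite comb_map.
  - by exists ([::], 0) => /not_ca.
by exists (fun a => (dec a).1), (fun a => (dec a).2).
Qed.

Theorem lemma3p12 (n : nat) (w : 'I_n -> int)
    (hw : (forall i, (0 < w i)%R) \/ (forall i, (w i < 0)%R))
    (A B C : dgmod w) (alpha : A -> B) (beta : B -> C) :
  free_dgmod A -> free_dgmod B -> free_dgmod C ->
  dg_ses alpha beta ->
  free_homology A -> free_homology B ->
  homology_seq_splits alpha beta.
Proof.
(* Only beta o alpha = 0 and the freeness of H(A) and H(B) are needed. *)
move=> _ _ _ [alpha_morph beta_morph _ _ exact_B].
move=> [I [z [z_cyc z_gen z_indep]]] [J [y [_ y_gen y_indep]]].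
have beta_alpha a : beta (alpha a) = 0 by apply/exact_B; exists a.
have [zcoef [zprim zcoefP]] := homology_coordinates z_gen.
have [h [ay hP]] := homology_basis_image alpha_morph (fun i => (z_cyc i).1) y_gen.
case: alpha_morph beta_morph => [alpha_lin _ alpha_d] [beta_lin _ beta_d].
exact: (sigma_splits alpha_lin alpha_d beta_lin beta_d beta_alpha
          z_indep y_indep zcoefP hP).
Qed.
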